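(* The class $\mathcal M_2$ of $2$-modular matroids is closed under duality: if $M\in\mathcal M_2$ then $M^*\in\mathcal M_2$.
   Context: An integer matrix $A$ is $\Delta$-modular if the determinant of every $\operatorname{rank}(A)\times\operatorname{rank}(A)$ submatrix has absolute value at most $\Delta$. $\mathcal M_\Delta$ is the class of matroids that are isomorphic to the vector matroid over $\mathbb{R}$ of the columns of some $\Delta$-modular matrix. *)

From Stdlib Require Import Reals.
From HB Require Import structures.
From mathcomp Require Import all_boot all_order all_algebra.
From mathcomp Require Import Rstruct.
Set Implicit Arguments. Unset Strict Implicit. Unset Printing Implicit Defensive.
Import Order.TTheory GRing.Theory Num.Theory.
Local Open Scope ring_scope.

Definition is_matroid (E : finType) (I : {set {set E}}) : Prop :=
  [/\ set0 \in I,
      (forall X Y : {set E}, Y \in I -> X \subset Y -> X \in I) &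
      (forall X Y : {set E}, X \in I -> Y \in I -> (#|X| < #|Y|)%N ->
         exists2 e, e \in Y :\: X & e |: X \in I)].

Definition bases (E : finType) (I : {set {set E}}) : {set {set E}} :=
  [set B in I | [forall X in I, (B \subset X) ==> (X == B)]].

(* Dual matroid: its bases are the complements of the bases of M, so its
   independent sets are the subsets of complements of bases of M. *)
Definition dual (E : finType) (I : {set {set E}}) : {set {set E}} :=
  [set X : {set E} | [exists B in bases I, X \subset ~: B]].

Definition realmx (m n : nat) (A : 'M[int]_(m, n)) : 'M[R]_(m, n) :=
  map_mx (fun z : int => z%:~R) A.

Definition Delta_modular (Delta : nat) (m n : nat) (A : 'M[int]_(m, n)) : Prop :=
  forall (f : 'I_(\rank (realmx A)) -> 'I_m) (g : 'I_(\rank (realmx A)) -> 'I_n),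
    injective f -> injective g ->
    (`|\det (mxsub f g A)| <= Delta%:Z)%R.

Definition represents (E : finType) (I : {set {set E}}) (m n : nat)
    (A : 'M[int]_(m, n)) (h : E -> 'I_n) : Prop :=
  bijective h /\
  forall X : {set E},
    X \in I <-> free [seq col (h x) (realmx A) | x <- enum X].

(* The class M_Delta (closed under isomorphism via the bijection h). *)
Definition in_MDelta (Delta : nat) (E : finType) (I : {set {set E}}) : Prop :=
  exists (m n : nat) (A : 'M[int]_(m, n)) (h : E -> 'I_n),
    Delta_modular Delta A /\ represents I A h.

(* Let the integer matrix A, of rank r, be 2-modular and represent M.  We pick
   rows f0 and columns g0 of A whose r x r minor d0 is nonzero and divides
   every maximal minor on the rows f0: one of absolute value 1 if there is
   one, otherwise any nonzero one, since all maximal minors then lie in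
   {0, 2, -2}.  With A0 that submatrix, C = A0^-1 A_f0 has the row space of A
   and is the identity on the columns g0; its entries are ratios of maximal
   minors by d0, hence integers, and its maximal minors are those of A divided
   by d0, hence bounded by 2.  If G selects the columns g0, the integer matrix
   (1 - G C)^T represents the dual matroid and its maximal minors are bounded
   by those of C. *)

From Stdlib Require Import Reals Classical.
From Pilot Require Import Defs.
From mathcomp Require Import all_boot all_order all_algebra.
From mathcomp Require Import Rstruct.
From mathcomp Require Import zify lra.
Set Implicit Arguments. Unset Strict Implicit. Unset Printing Implicit Defensive.
Import Order.TTheory GRing.Theory Num.Theory.
Local Open Scope ring_scope.

Section SelectionMatrices.
Variable F : pzRingType.

Definition selmx (n p : nat) (s : 'I_p -> 'I_n) : 'M[F]_(n, p) :=
  \matrix_(a, l) ((a == s l)%:R).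

Lemma mulmx_selmx (m n p : nat) (M : 'M[F]_(m, n)) (s : 'I_p -> 'I_n) x y :
  (M *m selmx s) x y = M x (s y).
Proof.
rewrite !mxE (bigD1 (s y)) //= big1 ?addr0 => [|k ks]; first by rewrite mxE eqxx mulr1.
by rewrite mxE (negbTE ks) mulr0.
Qed.

Lemma mxsub_selmx (m n p q : nat) (f : 'I_p -> 'I_m) (g : 'I_q -> 'I_n)
    (M : 'M[F]_(m, n)) :
  mxsub f g M = (selmx f)^T *m M *m selmx g.
Proof.
apply/matrixP => i j; rewrite mulmx_selmx !mxE (bigD1 (f i)) //= big1 => [|k kn].
  by rewrite addr0 !mxE eqxx mul1r.
by rewrite !mxE (negbTE kn) mul0r.
Qed.

Lemma selmx_tr_mul (n p q : nat) (s : 'I_p -> 'I_n) (s' : 'I_q -> 'I_n) :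
  (selmx s)^T *m selmx s' = \matrix_(l, l') ((s l == s' l')%:R).
Proof.
by apply/matrixP => i j; rewrite -[_^T]mulmx1 -mxsub_selmx !mxE.
Qed.

Lemma selmx_tr_mul_inj (n p : nat) (s : 'I_p -> 'I_n) :
  injective s -> (selmx s)^T *m selmx s = 1%:M.
Proof.
by move=> s_inj; rewrite selmx_tr_mul; apply/matrixP => i j; rewrite !mxE (inj_eq s_inj).
Qed.

Lemma selmx_tr_mul_disj (n p q : nat) (s : 'I_p -> 'I_n) (s' : 'I_q -> 'I_n) :
  (forall l l', s l != s' l') -> (selmx s)^T *m selmx s' = 0.
Proof.
by move=> disj; rewrite selmx_tr_mul; apply/matrixP => i j; rewrite !mxE (negbTE (disj i j)).
Qed.

Lemma selmx_mul_tr (n p : nat) (s : 'I_p -> 'I_n) : injective s ->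
  selmx s *m (selmx s)^T = \matrix_(a, b) (((a == b) && (a \in codom s))%:R).
Proof.
move=> s_inj; apply/matrixP => a b; rewrite !mxE.
case: (boolP (a \in codom s)) => [/codomP [l ->]|a_out].
  rewrite (bigD1 l) //= big1 => [|k kl]; last first.
    by rewrite !mxE (inj_eq s_inj) eq_sym (negbTE kl) mul0r.
  by rewrite addr0 !mxE eqxx mul1r andbT eq_sym.
rewrite andbF big1 // => k _; rewrite !mxE; case: eqP => [a_sk|_]; last by rewrite mul0r.
by case/negP: a_out; rewrite a_sk codom_f.
Qed.

End SelectionMatrices.

Lemma codom_cover (n p q : nat) (s : 'I_p -> 'I_n) (s' : 'I_q -> 'I_n) :
  injective s -> injective s' -> (forall l l', s l != s' l') -> (p + q = n)%N ->
  forall a, (a \in codom s) || (a \in codom s').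
Proof.
move=> s_inj s'_inj disj pqn a; apply: contraT; rewrite negb_or => /andP [a_s a_s'].
pose S := [set x in codom s]; pose S' := [set x in codom s'].
have cardS : #|S| = p by rewrite cardsE card_codom // card_ord.
have cardS' : #|S'| = q by rewrite cardsE card_codom // card_ord.
have disjSS' : #|S :&: S'| = 0%N.
  apply/eqP; rewrite cards_eq0; apply/eqP/setP => x; rewrite !inE.
  apply/negP => /andP [/codomP [l ->] /codomP [l' e]].
  by have := disj l l'; rewrite e eqxx.
have : (#|S :|: S'| < #|'I_n|)%N.
  rewrite -cardsT; apply: proper_card; rewrite properEneq subsetT andbT.
  by apply/negP => /eqP /setP /(_ a); rewrite !inE (negbTE a_s) (negbTE a_s').
rewrite cardsU cardS cardS' disjSS' card_ord; lia.
Qed.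

Lemma exists_complement_enum (n r k : nat) (g : 'I_k -> 'I_n) :
  injective g -> (k + r = n)%N ->
  exists t : 'I_r -> 'I_n, injective t /\ forall l l', t l != g l'.
Proof.
move=> g_inj krn; set T := ~: [set g l | l in 'I_k].
have cardT : r = #|T|.
  by have := cardsC [set g l | l in 'I_k]; rewrite card_imset // !card_ord -/T; lia.
exists (fun l => enum_val (cast_ord cardT l)); split.
  by move=> x y /enum_val_inj /cast_ord_inj.
move=> l l'; have := enum_valP (cast_ord cardT l); rewrite inE.
by apply: contra => /eqP ->; apply: imset_f.
Qed.

Lemma perm_selmx (F : pzRingType) (n p q : nat) (s : 'I_p -> 'I_n) (s' : 'I_q -> 'I_n) :
  injective s -> injective s' -> (forall l l', s l != s' l') -> (p + q = n)%N ->
  let P := row_mx (selmx F s) (selmx F s') in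
  P *m P^T = 1%:M /\ P^T *m P = 1%:M.
Proof.
move=> s_inj s'_inj disj pqn P; have cover := codom_cover s_inj s'_inj disj pqn.
split.
  rewrite /P tr_row_mx mul_row_col !selmx_mul_tr //; apply/matrixP => a b; rewrite !mxE.
  case: eqP => [->|]; last by rewrite !andFb addr0.
  have := cover b; case: (boolP (b \in codom s)) => [/codomP [l ->]|_] /=.
    case: (boolP (_ \in codom s')) => [/codomP [l' e]|_]; last by rewrite addr0.
    by have := disj l l'; rewrite e eqxx.
  by move=> ->; rewrite add0r.
rewrite /P tr_row_mx mul_col_row !selmx_tr_mul_inj // !selmx_tr_mul_disj //.
  by rewrite -scalar_mx_block.
by move=> l l'; rewrite eq_sym.
Qed.

Section ColumnMatroid.
Variables (F : fieldType) (m n : nat) (M : 'M[F]_(m, n)).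

Definition cols_free (P : {set 'I_n}) : Prop :=
  forall c : 'cV[F]_n, (forall a, a \notin P -> c a 0 = 0) -> M *m c = 0 -> c = 0.

(* The columns of M indexed by Z span its column space: every linear form
   vanishing on them vanishes on all the columns. *)
Definition cols_span (Z : {set 'I_n}) : Prop :=
  forall u : 'rV[F]_m, (forall a, a \in Z -> (u *m M) 0 a = 0) -> u *m M = 0.

Lemma free_cols_free (s : seq 'I_n) : uniq s ->
  free [seq col j M | j <- s] <-> cols_free [set j in s].
Proof.
move=> s_uniq; set t := in_tuple s.
have t_inj : injective (tnth t) by apply/tuple_uniqP.
pose cv (k : 'I_(size s) -> F) : 'cV[F]_n := \sum_i k i *: delta_mx (tnth t i) 0.
have combE k : \sum_(i < size s) k i *: [seq col j M | j <- s]`_i = M *m cv k.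
  rewrite mulmx_sumr; apply: eq_bigr => i _; rewrite -scalemxAr -colE.
  by rewrite (nth_map (tnth t i)) ?size_tuple // [in RHS](tnth_nth (tnth t i)).
have cvE k a : cv k a 0 = \sum_i k i * (a == tnth t i)%:R.
  by rewrite /cv summxE; apply: eq_bigr => i _; rewrite !mxE eqxx andbT.
have cv_in k i : cv k (tnth t i) 0 = k i.
  rewrite cvE (bigD1 i) //= big1 ?addr0 ?eqxx ?mulr1 // => l li.
  by rewrite (inj_eq t_inj) eq_sym (negbTE li) mulr0.
have cv_out k a : a \notin s -> cv k a 0 = 0.
  move=> a_out; rewrite cvE big1 // => i _; case: eqP => [a_ti|]; last by rewrite mulr0.
  by case/negP: a_out; rewrite a_ti; apply: mem_tnth.
have cvK (c : 'cV[F]_n) : (forall a, a \notin [set j in s] -> c a 0 = 0) ->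
    c = cv (fun i => c (tnth t i) 0).
  move=> c_supp; apply/matrixP => a b; rewrite (ord1 b).
  case: (boolP (a \in s)) => [/(tnthP t) [i ->]|a_out]; first by rewrite cv_in.
  by rewrite cv_out // c_supp // inE.
have freeE := @freeP _ _ _ (map_tuple (fun j => col j M) t).
split.
  move=> /freeE fr c c_supp Mc.
  have := fr (fun i => c (tnth t i) 0); rewrite combE -(cvK c c_supp) => /(_ Mc) k0.
  apply/matrixP => a b; rewrite (ord1 b) (cvK c c_supp) cvE mxE big1 // => i _.
  by rewrite k0 mul0r.
move=> fr; apply/freeE => k; rewrite combE => Mk i.
rewrite -cv_in (fr (cv k)) ?mxE // => a; rewrite inE; exact: cv_out.
Qed.

Lemma dependent_in_span (P : {set 'I_n}) (j : 'I_n) :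
  cols_free P -> ~ cols_free (j |: P) ->
  forall u : 'rV[F]_m, (forall a, a \in P -> (u *m M) 0 a = 0) -> (u *m M) 0 j = 0.
Proof.
move=> freeP dep u uP.
have [c [c_supp Mc c_neq0]] : exists c : 'cV[F]_n,
    [/\ (forall a, a \notin j |: P -> c a 0 = 0), M *m c = 0 & c <> 0].
  apply: NNPP => no_c; apply: dep => c c_supp Mc.
  by apply: NNPP => c_neq0; apply: no_c; exists c.
have cj : c j 0 != 0.
  apply/eqP => cj0; apply: c_neq0; apply: freeP => // a aP.
  case: (a =P j) => [->//|aj]; apply: c_supp; rewrite !inE negb_or aP andbT.
  exact/eqP.
have : ((u *m M) *m c) 0 0 = 0 by rewrite -mulmxA Mc mulmx0 mxE.
rewrite mxE (bigD1 j) //= big1 ?addr0 => [/eqP|a aj].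
  by rewrite mulf_eq0 (negbTE cj) orbF => /eqP.
case: (boolP (a \in P)) => [/uP ->|a_out]; first by rewrite mul0r.
by rewrite c_supp ?mulr0 // !inE negb_or aj.
Qed.

Lemma maximal_free_span (P S : {set 'I_n}) :
  cols_free P -> (forall j, j \in S -> j \notin P -> ~ cols_free (j |: P)) ->
  forall u : 'rV[F]_m, (forall a, a \in P -> (u *m M) 0 a = 0) ->
  forall j, j \in S -> (u *m M) 0 j = 0.
Proof.
move=> freeP maxP u uP j jS; case: (boolP (j \in P)) => [/uP //|j_out].
exact: (dependent_in_span freeP (maxP j jS j_out)).
Qed.

Lemma free_notin_span (P : {set 'I_n}) (j : 'I_n) :
  cols_free (j |: P) -> j \notin P ->
  ~ (forall u : 'rV[F]_m, (forall a, a \in P -> (u *m M) 0 a = 0) -> (u *m M) 0 j = 0).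
Proof.
move=> freejP j_out jspan.
(* N is M with the columns outside P erased; column j lies in the row space
   of N^T, which yields a dependency between j and P. *)
pose D : 'M[F]_n := diag_mx (\row_a ((a \in P)%:R)).
pose N := M *m D.
have N_col (u : 'rV[F]_m) : u *m N = 0 -> u *m col j M = 0.
  move=> uN; rewrite colE mulmxA -colE; apply/matrixP => x y.
  rewrite (ord1 x) (ord1 y) mxE [RHS]mxE; apply: jspan => a aP.
  have : (u *m N) 0 a = 0 by rewrite uN mxE.
  by rewrite /N mulmxA mul_mx_diag !mxE aP mulr1.
set K := cokermx N^T.
have NK : N^T *m K = 0 := mulmx_coker _.
have colK : (col j M)^T *m K = 0.
  apply: trmx_inj; rewrite trmx_mul trmxK trmx0.
  apply/row_matrixP => l; rewrite row_mul row0; apply: N_col.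
  rewrite -row_mul (_ : K^T *m N = 0) ?row0 //.
  by rewrite -[N]trmxK -trmx_mul NK trmx0.
have : ((col j M)^T <= N^T)%MS by rewrite submxE colK.
case/submxP => w /(congr1 trmx); rewrite trmxK trmx_mul trmxK => colE_w.
pose c : 'cV[F]_n := D *m w^T - delta_mx j 0.
have cE a : c a 0 = (a \in P)%:R * w 0 a - (a == j)%:R.
  by rewrite /c mxE mul_diag_mx !mxE andbT.
have Mc : M *m c = 0 by rewrite /c mulmxBr mulmxA -/N -colE_w -colE subrr.
have c_supp a : a \notin j |: P -> c a 0 = 0.
  rewrite !inE negb_or => /andP [aj a_out].
  by rewrite cE (negbTE a_out) mul0r (negbTE aj) subrr.
have := congr1 (fun M : 'cV[F]_n => M j 0) (freejP c c_supp Mc).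
rewrite cE mxE (negbTE j_out) mul0r !eqxx /= sub0r.
by move/eqP; rewrite oppr_eq0 oner_eq0.
Qed.

End ColumnMatroid.

Section RepresentedMatroid.
Variables (E : finType) (F : fieldType) (m n : nat) (M : 'M[F]_(m, n)).
Variable h : E -> 'I_n.
Hypothesis h_bij : bijective h.

Let h_inj : injective h := bij_inj h_bij.

Let h_surj a : exists x, a = h x.
Proof. by case: h_bij => g _ hg; exists (g a); rewrite hg. Qed.

Lemma free_image_cols (X : {set E}) :
  free [seq col (h x) M | x <- enum X] <-> cols_free M (h @: X).
Proof.
rewrite (_ : [seq col (h x) M | x <- enum X] = [seq col j M | j <- map h (enum X)]);
  last by rewrite -map_comp.
rewrite (_ : h @: X = [set j in map h (enum X)]).
  by apply: free_cols_free; rewrite map_inj_uniq // enum_uniq.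
apply/setP => a; rewrite inE; apply/imsetP/mapP => [] [x xX ->]; exists x => //.
  by rewrite mem_enum.
by rewrite mem_enum in xX.
Qed.

Variable I : {set {set E}}.
Hypothesis I_matroid : is_matroid I.
Hypothesis I_repr : forall X, X \in I <-> cols_free M (h @: X).

Let maximal_indep_span (B Y : {set E}) :
  B \in I -> (forall x, x \in Y -> x |: B \in I -> x \in B) ->
  forall u : 'rV[F]_m, (forall a, a \in h @: B -> (u *m M) 0 a = 0) ->
  forall x, x \in Y -> (u *m M) 0 (h x) = 0.
Proof.
move=> BI Bmax u uB x xY.
apply: (maximal_free_span (M := M) (S := h @: Y) ((I_repr B).1 BI) _ uB); last exact: imset_f.
move=> _ /imsetP [y yY ->] hy_out; rewrite -imsetU1 => /I_repr /(Bmax y yY) yB.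
by rewrite imset_f in hy_out.
Qed.

Lemma dual_cols_span (X : {set E}) : X \in dual I <-> cols_span M (~: (h @: X)).
Proof.
have [I0 I_sub _] := I_matroid.
have mem_h (x : E) (S : {set E}) : (h x \in h @: S) = (x \in S) by rewrite mem_imset.
split.
  rewrite inE => /existsP [B /andP [B_base XB]] u uX.
  move: B_base; rewrite inE => /andP [BI /forallP Bmax].
  have uB a : a \in h @: B -> (u *m M) 0 a = 0.
    case/imsetP => y yB ->; apply: uX; rewrite inE mem_h.
    by apply/negP => /(subsetP XB); rewrite inE yB.
  apply/matrixP => i a; rewrite (ord1 i) [RHS]mxE; have [x ->] := h_surj a.
  apply: (maximal_indep_span (Y := setT) BI _ uB) => // y _ yBI.
  by have := Bmax (y |: B); rewrite yBI subsetUr => /eqP <-; rewrite setU11.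
move=> X_span.
pose Pr := fun B : {set E} => (B \subset ~: X) && (B \in I).
have Pr0 : Pr set0 by rewrite /Pr sub0set I0.
have [B /maxsetP [/andP [BX BI] Bmax] _] := maxset_exists Pr0.
(* B is a maximal independent subset of the complement of X, so it spans *)
have B_span (u : 'rV[F]_m) : (forall a, a \in h @: B -> (u *m M) 0 a = 0) -> u *m M = 0.
  move=> uB; apply: X_span => a; have [y ->] := h_surj a; rewrite inE mem_h => yX.
  apply: (maximal_indep_span (Y := ~: X) BI _ uB); last by rewrite inE.
  move=> x xX xBI; have := Bmax (x |: B); rewrite /Pr xBI andbT subUset sub1set xX BX.
  by move=> /(_ isT (subsetUr _ _)) <-; rewrite setU11.
rewrite inE; apply/existsP; exists B; rewrite subsetC BX andbT inE BI /=.
apply/forallP => X'; apply/implyP => X'I; apply/implyP => BX'.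
rewrite eqEsubset BX' andbT; apply/subsetP => x xX'; apply: contraT => xB.
have /I_repr : x |: B \in I by apply: (I_sub _ X') => //; rewrite subUset sub1set xX'.
rewrite imsetU1 => free_xB; exfalso; apply: (free_notin_span free_xB); first by rewrite mem_h.
by move=> u uB; rewrite (B_span u uB) mxE.
Qed.

End RepresentedMatroid.

(* With C G = 1, the matrix 1 - G C projects along the row space of C onto the
   kernel of C; it is annihilated by C on the left and by G on the right. *)
Lemma dual_proj_left (F : pzRingType) n r (C : 'M[F]_(r, n)) (G : 'M[F]_(n, r)) :
  C *m G = 1%:M -> C *m (1%:M - G *m C) = 0.
Proof. by move=> CG; rewrite mulmxBr mulmx1 mulmxA CG mul1mx subrr. Qed.

Lemma dual_proj_right (F : pzRingType) n r (C : 'M[F]_(r, n)) (G : 'M[F]_(n, r)) :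
  C *m G = 1%:M -> (1%:M - G *m C) *m G = 0.
Proof. by move=> CG; rewrite mulmxBl mul1mx -mulmxA CG mulmx1 subrr. Qed.

Section DualMatrix.
Variables (F : fieldType) (n r : nat) (C : 'M[F]_(r, n)) (G : 'M[F]_(n, r)).
Hypothesis CG : C *m G = 1%:M.

Let Q : 'M[F]_n := 1%:M - G *m C.
Let CQ : C *m Q = 0 := dual_proj_left CG.
Let QG : Q *m G = 0 := dual_proj_right CG.

Lemma dual_matrix_free m (M : 'M[F]_(m, n)) (K : 'M[F]_(m, r)) (J : 'M[F]_(r, m)) :
  M = K *m C -> C = J *m M ->
  forall Y, cols_free Q^T Y <-> cols_span M (~: Y).
Proof.
move=> MK CJ Y; split.
  move=> freeY u uY.
  have uM0 : (u *m M)^T = 0.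
    apply: freeY => [a aY|]; first by rewrite mxE; apply: uY; rewrite inE.
    by rewrite -trmx_mul MK !mulmxA -(mulmxA _ C) CQ mulmx0 trmx0.
  by rewrite -[u *m M]trmxK uM0 trmx0.
move=> spanY c c_supp Qc.
have cM : c^T = c^T *m G *m J *m M.
  have : c^T *m Q = 0 by rewrite -[c^T *m _]trmxK trmx_mul trmxK Qc trmx0.
  by rewrite mulmxBr mulmx1 -!mulmxA -CJ => /eqP; rewrite subr_eq0 => /eqP.
have : c^T *m G *m J *m M = 0.
  by apply: spanY => a aY; rewrite -cM mxE; apply: c_supp; rewrite inE in aY.
by rewrite -cM => /(congr1 trmx); rewrite trmxK trmx0.
Qed.

Lemma dual_matrix_rank : (\rank Q^T + r)%N = n.
Proof.
rewrite mxrank_tr.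
have rankG : \rank G = r.
  apply/eqP; rewrite eqn_leq rank_leq_col /=.
  by rewrite -{1}(mxrank1 F r) -CG mxrankM_maxr.
have rankQ := mxrank_mul_min Q G; rewrite QG mxrank0 rankG in rankQ.
have QGC : Q + G *m C = 1%:M by rewrite subrK.
have rank_sum := mxrank_add Q (G *m C); rewrite QGC mxrank1 in rank_sum.
have rankGC := mxrankM_maxl G C; rewrite rankG in rankGC.
lia.
Qed.

End DualMatrix.

Lemma det_identity_but_col (F : comPzRingType) r (M : 'M[F]_r) (i : 'I_r) :
  (forall l l', l' != i -> M l l' = (l == l')%:R) -> \det M = M i i.
Proof.
move=> M_id; rewrite (expand_det_col M i) (bigD1 i) //= big1 ?addr0 => [|l li].
  rewrite /cofactor (_ : row' i (col' i M) = 1%:M) ?det1 ?mulr1.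
    by rewrite -signr_odd addnn odd_double expr0 mulr1.
  apply/matrixP => p q; rewrite !mxE M_id; last by rewrite eq_sym neq_lift.
  by rewrite (inj_eq lift_inj).
rewrite /cofactor; have [p ep _] := unlift_some (negbT (negbTE li)).
rewrite (expand_det_row _ p) big1 ?mulr0 // => q _.
rewrite !mxE -ep M_id; last by rewrite eq_sym neq_lift.
by rewrite (negbTE (neq_lift _ _)) mul0r.
Qed.

Section DualMinors.
Variables (F : realFieldType) (n r k : nat) (C : 'M[F]_(r, n)) (g0 : 'I_r -> 'I_n).
Hypotheses (g0_inj : injective g0) (Cg0 : C *m selmx F g0 = 1%:M).
Hypothesis krn : (k + r = n)%N.

Let G := selmx F g0.
Let Q : 'M[F]_n := 1%:M - G *m C.
Let CQ : C *m Q = 0 := dual_proj_left Cg0.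
Let QG : Q *m G = 0 := dual_proj_right Cg0.

(* The rows of Q^T indexed by g0 vanish, so do the minors using them. *)
Lemma dual_minor_on_base (f g : 'I_k -> 'I_n) b i :
  f b = g0 i -> \det (mxsub f g Q^T) = 0.
Proof.
move=> fbi; rewrite (expand_det_row _ b) big1 // => l _.
have -> : mxsub f g Q^T b l = Q (g l) (g0 i) by rewrite !mxE fbi.
by have := mulmx_selmx Q g0 (g l) i; rewrite QG mxE => <-; rewrite mul0r.
Qed.

(* A maximal minor of Q^T on rows f avoiding g0 and columns g equals, up to
   sign, the minor of C on the columns t complementary to g: up to a
   permutation of coordinates C = [1 | D] and Q^T = [-D^T | 1]. *)
Lemma dual_minor_off_base (f g : 'I_k -> 'I_n) : injective f -> injective g ->
  (forall b l, f b != g0 l) ->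
  exists t : 'I_r -> 'I_n, injective t /\
    `|\det (mxsub f g Q^T)| = `|\det (C *m selmx F t)|.
Proof.
move=> f_inj g_inj f_off; have rkn : (r + k = n)%N by rewrite addnC.
have g0f l b : g0 l != f b by rewrite eq_sym.
have [t [t_inj tg]] := exists_complement_enum (r := r) g_inj krn.
exists t; split => //.
have [Pss _] := perm_selmx F g0_inj f_inj g0f rkn.
have [Ptt Ptt'] := perm_selmx F t_inj g_inj tg rkn.
set Ps := row_mx G (selmx F f) in Pss.
set Pt := row_mx (selmx F t) (selmx F g) in Ptt Ptt'.
set X1 := col_mx C (selmx F g)^T.
set V := row_mx G (Q *m selmx F f).
have det_minor : \det (X1 *m V) = \det (mxsub f g Q^T).
  rewrite /X1 /V mul_col_row Cg0 (mulmxA C Q) CQ mul0mx det_lblock det1 mul1r.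
  by rewrite mxsub_selmx -[RHS]det_tr !trmx_mul !trmxK mulmxA.
have X1V : X1 *m V = (X1 *m Pt) *m ((Pt^T *m Ps) *m (Ps^T *m V)).
  by rewrite !mulmxA -(mulmxA X1) Ptt mulmx1 -(mulmxA _ Ps) Pss mulmx1.
have det_X1Pt : \det (X1 *m Pt) = \det (C *m selmx F t).
  rewrite /X1 /Pt mul_col_row selmx_tr_mul_inj // selmx_tr_mul_disj; last first.
    by move=> l l'; rewrite eq_sym.
  by rewrite det_ublock det1 mulr1.
have det_PsV : \det (Ps^T *m V) = 1.
  rewrite /Ps /V tr_row_mx mul_col_row selmx_tr_mul_inj // selmx_tr_mul_disj //.
  have -> : (selmx F f)^T *m (Q *m selmx F f) = 1%:M.
    rewrite /Q mulmxBl mul1mx mulmxBr selmx_tr_mul_inj // !mulmxA selmx_tr_mul_disj //.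
    by rewrite !mul0mx subr0.
  by rewrite det_ublock !det1 mulr1.
have det_PtPs : `|\det (Pt^T *m Ps)| = 1.
  apply/eqP; rewrite -sqr_norm_eq1 expr2 -{2}det_tr -det_mulmx.
  by rewrite !trmx_mul trmxK mulmxA -(mulmxA _ Ps) Pss mulmx1 Ptt' det1.
by rewrite -det_minor X1V !det_mulmx det_X1Pt det_PsV mulr1 normrM det_PtPs mulr1.
Qed.

Lemma dual_minor_bound (f g : 'I_k -> 'I_n) : injective f -> injective g ->
  exists t : 'I_r -> 'I_n, injective t /\
    `|\det (mxsub f g Q^T)| <= `|\det (C *m selmx F t)|.
Proof.
move=> f_inj g_inj.
case: (boolP [exists b, f b \in codom g0]) => [/existsP [b /codomP [i fbi]]|f_out].
  by exists g0; rewrite (dual_minor_on_base g fbi) normr0 normr_ge0.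
have [|t [t_inj ->]] := dual_minor_off_base f_inj g_inj; last by exists t.
by move=> b l; apply/eqP => e; case/existsP: f_out; exists b; rewrite e codom_f.
Qed.

End DualMinors.

Lemma realmx_det n (A : 'M[int]_n) : \det (Defs.realmx A) = (\det A)%:~R.
Proof. by rewrite /Defs.realmx (det_map_mx (intr : {rmorphism int -> R})). Qed.

Lemma realmx_mxsub m n (A : 'M[int]_(m, n)) p q (f : 'I_p -> 'I_m) (g : 'I_q -> 'I_n) :
  Defs.realmx (mxsub f g A) = mxsub f g (Defs.realmx A).
Proof. by rewrite /Defs.realmx map_mxsub. Qed.

Lemma realmx_dual n r (X : 'M[int]_(n, r)) (Y : 'M[int]_(r, n)) :
  Defs.realmx ((1%:M - X *m Y)^T) = (1%:M - Defs.realmx X *m Defs.realmx Y)^T.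
Proof.
rewrite /Defs.realmx -map_trmx.
rewrite (map_mxB (intr : {rmorphism int -> R})) (map_mx1 (intr : {rmorphism int -> R})).
by rewrite (map_mxM (intr : {rmorphism int -> R})).
Qed.

Lemma det_mxsub_noninj (F : comPzRingType) m n r (M : 'M[F]_(m, n))
    (f : 'I_r -> 'I_m) (t : 'I_r -> 'I_n) :
  ~~ injectiveb t -> \det (mxsub f t M) = 0.
Proof.
case/injectivePn => x [y xy txy]; rewrite -det_tr.
by apply: (determinant_alternate xy) => l; rewrite !mxE txy.
Qed.

Lemma exists_base_minor m n (A : 'M[int]_(m, n)) :
  exists (f0 : 'I_(\rank (Defs.realmx A)) -> 'I_m) (g0 : 'I_(\rank (Defs.realmx A)) -> 'I_n),
    [/\ injective f0, injective g0 & \det (mxsub f0 g0 A) != 0].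
Proof.
set Ar := Defs.realmx A.
have rows_full : row_full (rowsub (maxrankfun Ar) Ar)^T.
  by rewrite /row_full mxrank_tr; exact: maxrowsub_free.
exists (maxrankfun Ar), (fullrankfun rows_full); split.
- exact: maxrankfun_inj.
- exact: fullrankfun_inj.
- rewrite -(intr_eq0 R) -realmx_det realmx_mxsub -unitfE -unitmxE -unitmx_tr.
  rewrite (_ : _^T = rowsub (fullrankfun rows_full) (rowsub (maxrankfun Ar) Ar)^T).
    exact: fullrowsub_unit.
  by apply/matrixP => i j; rewrite !mxE.
Qed.

(* For a 2-modular matrix there is a nonsingular maximal minor dividing every
   maximal minor taken on the same rows: one of absolute value 1 if it exists,
   otherwise all maximal minors lie in {0, 2, -2}. *)
Lemma exists_dividing_base m n (A : 'M[int]_(m, n)) :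
  Delta_modular 2 A ->
  exists (f0 : 'I_(\rank (Defs.realmx A)) -> 'I_m) (g0 : 'I_(\rank (Defs.realmx A)) -> 'I_n),
    [/\ injective f0, injective g0, \det (mxsub f0 g0 A) != 0 &
      forall t, (\det (mxsub f0 g0 A) %| \det (mxsub f0 t A))%Z].
Proof.
move=> A_mod.
case: (classic (exists (f0 : 'I_(\rank (Defs.realmx A)) -> 'I_m)
    (g0 : 'I_(\rank (Defs.realmx A)) -> 'I_n),
    [/\ injective f0, injective g0 & `|\det (mxsub f0 g0 A)| = 1])).
  move=> [f0 [g0 [f0_inj g0_inj d1]]]; exists f0, g0; split => // [|t].
    by rewrite -normr_eq0 d1.
  by apply/dvdzP; exists (\det (mxsub f0 t A) * \det (mxsub f0 g0 A)); nia.
move=> no_unit_minor; have [f0 [g0 [f0_inj g0_inj d0_neq0]]] := exists_base_minor A.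
exists f0, g0; split => // t; set d0 := \det (mxsub f0 g0 A).
have d0_abs : `|d0| = 2.
  have := A_mod f0 g0 f0_inj g0_inj; have : `|d0| != 1.
    by apply/eqP => d1; apply: no_unit_minor; exists f0, g0.
  move: d0_neq0; lia.
case: (boolP (injectiveb t)) => [/injectiveP t_inj|/det_mxsub_noninj ->].
  set D := \det (mxsub f0 t A); apply/dvdzP.
  have D_abs : `|D| != 1.
    by apply/eqP => d1; apply: no_unit_minor; exists f0, t.
  have := A_mod f0 t f0_inj t_inj; rewrite -/D => D_le.
  have : D = 0 \/ D = d0 \/ D = - d0 by lia.
  by case=> [->|[->|->]]; [exists 0 | exists 1 | exists (-1)]; rewrite ?mul0r ?mul1r ?mulN1r.
exact: dvdz0.
Qed.

Section BaseCoordinates.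
Variables (m n : nat) (A : 'M[int]_(m, n)).
Local Notation Ar := (Defs.realmx A).
Local Notation r := (\rank Ar).
Variables (f0 : 'I_r -> 'I_m) (g0 : 'I_r -> 'I_n).
Hypothesis f0_inj : injective f0.
Hypothesis d0_neq0 : \det (mxsub f0 g0 A) != 0.
Hypothesis d0_dvd : forall t, (\det (mxsub f0 g0 A) %| \det (mxsub f0 t A))%Z.

Let d0 := \det (mxsub f0 g0 A).
Let A0 := mxsub f0 g0 Ar.

Let det_A0 : \det A0 = d0%:~R.
Proof. by rewrite /A0 -realmx_mxsub realmx_det. Qed.

Let A0_unit : A0 \in unitmx.
Proof. by rewrite unitmxE unitfE det_A0 intr_eq0. Qed.

Definition base_coords : 'M[R]_(r, n) := invmx A0 *m ((selmx R f0)^T *m Ar).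
Local Notation C := base_coords.

Lemma base_coords_unit : C *m selmx R g0 = 1%:M.
Proof. by rewrite /C -mulmxA -mxsub_selmx mulVmx. Qed.

(* C has the same row space as A, since both have rank r. *)
Lemma base_coords_rowspace : exists K, Ar = K *m C.
Proof.
set Rw := (selmx R f0)^T *m Ar.
have rank_Rw : \rank Rw = r.
  apply/eqP; rewrite eqn_leq mxrankM_maxr /=.
  by rewrite -{1}(mxrank_unit A0_unit) /A0 mxsub_selmx mxrankM_maxl.
have : (Ar <= Rw)%MS by rewrite -(mxrank_leqif_sup (submxMl _ _)).2 rank_Rw.
case/submxP => L ALe; exists (L *m A0); apply: (etrans ALe).
by rewrite -mulmxA /C (mulmxA A0) mulmxV // mul1mx.
Qed.

Lemma base_coords_minor t : \det (mxsub f0 t Ar) = \det A0 * \det (C *m selmx R t).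
Proof. by rewrite -det_mulmx /C !mulmxA mulmxV // mul1mx mxsub_selmx. Qed.

(* Each entry of C is an integer: it is the quotient of the minor obtained
   by exchanging column g0 i for column j, by the base minor d0. *)
Lemma base_coords_integral i j : exists z : int, z%:~R = C i j.
Proof.
pose t l := if l == i then j else g0 l.
have Ct : \det (C *m selmx R t) = C i j.
  rewrite (det_identity_but_col (i := i)) => [|l l' l'i]; rewrite mulmx_selmx /t ?eqxx //.
  by rewrite (negbTE l'i) -mulmx_selmx base_coords_unit mxE.
have [e De] := dvdzP (d0_dvd t); exists e.
apply: (mulfI (x := d0%:~R)); first by rewrite intr_eq0.
by rewrite -Ct -det_A0 -base_coords_minor -realmx_mxsub realmx_det De intrM mulrC det_A0.
Qed.

(* Maximal minors of C are those of A divided by d0, hence bounded by Delta. *)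
Lemma base_coords_minor_bound Delta t : Delta_modular Delta A -> injective t ->
  `|\det (C *m selmx R t)| <= Delta%:R.
Proof.
move=> A_mod t_inj; have := A_mod f0 t f0_inj t_inj.
rewrite -(ler_int R) intr_norm -realmx_det realmx_mxsub base_coords_minor normrM.
have d0_ge1 : (1 <= `|d0%:~R : R|)%R by rewrite -intr_norm ler1z; lia.
rewrite det_A0.
have := normr_ge0 (\det (C *m selmx R t)); nra.
Qed.

End BaseCoordinates.

Lemma dual_modular_matrix Delta m n (A : 'M[int]_(m, n))
    (f0 : 'I_(\rank (Defs.realmx A)) -> 'I_m) (g0 : 'I_(\rank (Defs.realmx A)) -> 'I_n) :
  Delta_modular Delta A -> injective f0 -> injective g0 ->
  \det (mxsub f0 g0 A) != 0 ->
  (forall t, (\det (mxsub f0 g0 A) %| \det (mxsub f0 t A))%Z) ->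
  exists A' : 'M[int]_(n, n), Delta_modular Delta A' /\
    forall Y, cols_free (Defs.realmx A') Y <-> cols_span (Defs.realmx A) (~: Y).
Proof.
move=> A_mod f0_inj g0_inj d0_neq0 d0_dvd.
set C := base_coords f0 g0; have C_unit := base_coords_unit d0_neq0.
have /fin_all_exists [Cz CzE] : forall p, exists z : int, z%:~R = C p.1 p.2.
  by move=> [i j]; exact: base_coords_integral.
pose Q : 'M[int]_n :=
  (1%:M - (\matrix_(a, l) (a == g0 l)%:R) *m \matrix_(i, j) Cz (i, j))^T.
have realQ : Defs.realmx Q = (1%:M - selmx R g0 *m C)^T.
  rewrite realmx_dual; congr ((_ - _ *m _)^T); apply/matrixP => a b.
    by rewrite !mxE; case: eqP.
  by rewrite [LHS]mxE mxE (CzE (a, b)).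
exists Q; split => [f g f_inj g_inj|Y].
  have krn := dual_matrix_rank C_unit; rewrite -realQ in krn.
  have [t [t_inj minor_le]] := dual_minor_bound g0_inj C_unit krn f_inj g_inj.
  rewrite -(ler_int R) intr_norm -realmx_det realmx_mxsub (congr1 (mxsub f g) realQ).
  exact: le_trans minor_le (base_coords_minor_bound f0_inj d0_neq0 A_mod t_inj).
have [K AK] := base_coords_rowspace d0_neq0.
by rewrite realQ; apply: (dual_matrix_free C_unit AK); rewrite /C /base_coords mulmxA.
Qed.

Theorem corollary4p2 (E : finType) (I : {set {set E}}) :
  is_matroid I -> in_MDelta 2 I -> in_MDelta 2 (dual I).
Proof.
move=> I_matroid [m [n [A [h [A_mod [h_bij A_repr]]]]]].
have [f0 [g0 [f0_inj g0_inj d0_neq0 d0_dvd]]] := exists_dividing_base A_mod.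
have [A' [A'_mod A'_dual]] := dual_modular_matrix A_mod f0_inj g0_inj d0_neq0 d0_dvd.
have I_repr X : X \in I <-> cols_free (Defs.realmx A) (h @: X).
  by rewrite -free_image_cols //; exact: A_repr.
exists n, n, A', h; split => //; split => // X.
by rewrite free_image_cols // A'_dual; exact: dual_cols_span.
Qed.
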